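(* Consider the algorithm $\rho$-GRAD (with step-size parameter $\rho\ge1$): set $k=0$, $C=\emptyset$, $\overline{T}^0=T\setminus T'$; repeat: let $\mathbf{z}^k$ be an optimal solution of ODMTS-DFD$(\overline{T}^k)$; let ${T'}^k_{adp}$ be the set of trips $r\in T'\setminus C$ that adopt $\mathbf{z}^k$, and for each such $r$ let $\upsilon^r$ be the cost of its route under $\mathbf{z}^k$ minus the fixed price $\phi$; if ${T'}^k_{adp}=\emptyset$, stop and return $\mathbf{z}^k$; otherwise add to $C$ the (at most) $\rho$ trips of ${T'}^k_{adp}$ with the smallest $\upsilon^r$, set $\overline{T}^{k+1}=(T\setminus T')\cup C$ and $k\leftarrow k+1$. Then the last design $\mathbf{z}^k$ found by the algorithm, with trip set $\hat T=\overline{T}^k$, satisfies the correct rejection property: every latent trip in $T'\setminus\hat T$ rejects $\mathbf{z}^k$.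
   Context: Let $N$ be a finite set of nodes and $H \subseteq N$ a set of hubs. An ODMTS design is a vector $\mathbf{z}=(z_{hl})_{h,l\in H}\in\{0,1\}^{H\times H}$ satisfying $\sum_{l\in H} z_{hl}=\sum_{l\in H} z_{lh}$ for all $h\in H$; opening arc $(h,l)$ costs $\beta_{hl}$. Let $T$ be a finite set of trips; trip $r$ has origin $or^r\in N$, destination $de^r\in N$, number of riders $p^r\ge 0$, and cost coefficients $\tau^r_{hl}$ ($h,l\in H$) and $\gamma^r_{ij}$ ($i,j\in N$); $t_{hl}, t^{wait}_{hl}$ are bus travel and waiting times and $t_{ij}$ shuttle travel times. Given a design $\mathbf{z}$, a route for $r$ is a pair of binary vectors $x^r\in\{0,1\}^{H\times H}$, $y^r\in\{0,1\}^{N\times N}$ with $x^r_{hl}\le z_{hl}$ and, for every $i\in N$, $\sum_{h\in H}(x^r_{ih}-x^r_{hi})\,[\text{if } i\in H] + \sum_{j\in N}(y^r_{ij}-y^r_{ji})$ equal to $1$ if $i=or^r$, $-1$ if $i=de^r$, and $0$ otherwise. Its cost is $g^r=\sum_{h,l}\tau^r_{hl}x^r_{hl}+\sum_{i,j}\gamma^r_{ij}y^r_{ij}$ and its travel time is $f^r=\sum_{h,l}(t_{hl}+t^{wait}_{hl})x^r_{hl}+\sum_{i,j}t_{ij}y^r_{ij}$. The route of $r$ under $\mathbf{z}$ is a route minimizing $(g^r,f^r)$ lexicographically; $g^r(\mathbf{z}), f^r(\mathbf{z})$ denote its cost and time. For $\hat T\subseteq T$, ODMTS-DFD$(\hat T)$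 is the problem of minimizing $\sum_{h,l\in H}\beta_{hl}z_{hl}+\sum_{r\in\hat T}p^r g^r(\mathbf{z})$ over designs $\mathbf{z}$. The trip set is partitioned into core trips $T\setminus T'$ and latent trips $T'$. Each latent trip $r$ has a choice function $\mathcal{C}^r:\mathbb{R}\to\{0,1\}$; $r$ adopts $\mathbf{z}$ if $\mathcal{C}^r(f^r(\mathbf{z}))=1$ and rejects it otherwise. A design $\mathbf{z}$ optimal for ODMTS-DFD$(\hat T)$ satisfies the correct rejection property if every trip $r\in T'\setminus\hat T$ rejects $\mathbf{z}$. *)

From mathcomp Require Import all_boot all_order all_algebra.
Set Implicit Arguments. Unset Strict Implicit. Unset Printing Implicit Defensive.
Import Order.TTheory GRing.Theory Num.Theory.
Local Open Scope ring_scope.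

(* The data of an ODMTS instance.  Arc-indexed quantities are functions on
   N x N; hub arcs are those with both endpoints in [hubs]. *)
Record ODMTS (R : realFieldType) (N Trip : finType) := MkODMTS {
  hubs   : {set N};
  beta   : N -> N -> R;            (* cost of opening hub arc (h,l) *)
  orig   : Trip -> N;
  dest   : Trip -> N;
  riders : Trip -> R;
  tau    : Trip -> N -> N -> R;
  gamma  : Trip -> N -> N -> R;
  tbus   : N -> N -> R;
  twait  : N -> N -> R;
  tshut  : N -> N -> R;
  latent : {set Trip};
  choice : Trip -> R -> bool;
  price  : R
}.

Definition arcs (N : finType) := {ffun N * N -> bool}.

Section ODMTSDefs.
Variables (R : realFieldType) (N Trip : finType) (D : ODMTS R N Trip).

Local Notation H := (hubs D).
Definition b2R (b : bool) : R := (nat_of_bool b)%:R.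

Definition is_design (z : arcs N) : bool :=
  [forall i, z i ==> (i.1 \in H) && (i.2 \in H)] &&
  [forall h in H, (\sum_(l in H) nat_of_bool (z (h, l)))%N
                    == (\sum_(l in H) nat_of_bool (z (l, h)))%N].

Definition flow_rhs (r : Trip) (i : N) : R :=
  if i == orig D r then 1 else if i == dest D r then -1 else 0.

Definition flow_lhs (x y : arcs N) (i : N) : R :=
  (if i \in H then \sum_(h in H) (b2R (x (i, h)) - b2R (x (h, i))) else 0)
  + \sum_(j : N) (b2R (y (i, j)) - b2R (y (j, i))).

(* (x,y) is a route of trip r under design z (x <= z on hub arcs; since z
   is supported on H x H, x is too). *)
Definition is_route (r : Trip) (z : arcs N) (x y : arcs N) : bool :=
  [forall i, x i ==> z i] && [forall i : N, flow_lhs x y i == flow_rhs r i].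

Definition route_cost (r : Trip) (x y : arcs N) : R :=
  \sum_(h in H) \sum_(l in H) tau D r h l * b2R (x (h, l))
  + \sum_(i : N) \sum_(j : N) gamma D r i j * b2R (y (i, j)).

Definition route_time (x y : arcs N) : R :=
  \sum_(h in H) \sum_(l in H) (tbus D h l + twait D h l) * b2R (x (h, l))
  + \sum_(i : N) \sum_(j : N) tshut D i j * b2R (y (i, j)).

Definition lexle (a b : R * R) : bool :=
  (a.1 < b.1) || ((a.1 == b.1) && (a.2 <= b.2)).

Definition is_opt_route (r : Trip) (z : arcs N) (xy : arcs N * arcs N) : bool :=
  is_route r z xy.1 xy.2 &&
  [forall xy' : arcs N * arcs N, is_route r z xy'.1 xy'.2 ==>
     lexle (route_cost r xy.1 xy.2, route_time xy.1 xy.2)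
           (route_cost r xy'.1 xy'.2, route_time xy'.1 xy'.2)].

(* g^r(z) and f^r(z): cost and time of the lexicographically optimal route
   (all lex-optimal routes share the same pair (g,f)).  Default 0 if no route
   exists (cannot happen when orig r <> dest r). *)
Definition g_of (r : Trip) (z : arcs N) : R :=
  if [pick xy | is_opt_route r z xy] is Some xy then route_cost r xy.1 xy.2 else 0.
Definition f_of (r : Trip) (z : arcs N) : R :=
  if [pick xy | is_opt_route r z xy] is Some xy then route_time xy.1 xy.2 else 0.

Definition dfd_obj (That : {set Trip}) (z : arcs N) : R :=
  \sum_(h in H) \sum_(l in H) beta D h l * b2R (z (h, l))
  + \sum_(r in That) riders D r * g_of r z.

Definition dfd_optimal (That : {set Trip}) (z : arcs N) : Prop :=
  is_design z /\ forall z', is_design z' -> dfd_obj That z <= dfd_obj That z'.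

Definition adopts (r : Trip) (z : arcs N) : bool := choice D r (f_of r z).

Definition core : {set Trip} := ~: latent D.

Definition correct_rejection (That : {set Trip}) (z : arcs N) : Prop :=
  dfd_optimal That z /\
  forall r, r \in latent D :\: That -> ~~ adopts r z.

Definition upsilon (r : Trip) (z : arcs N) : R := g_of r z - price D.

Definition adopters (C : {set Trip}) (z : arcs N) : {set Trip} :=
  [set r in latent D :\: C | adopts r z].

(* A run of rho-GRAD: z k is the design of iteration k, C k the set C at the
   start of iteration k (so Tbar^k = core :|: C k). *)
Definition reached (z : nat -> arcs N) (C : nat -> {set Trip}) (k : nat) : Prop :=
  forall j, (j < k)%N -> adopters (C j) (z j) != set0.

Definition rho_grad_run (rho : nat) (z : nat -> arcs N) (C : nat -> {set Trip})
  : Prop :=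
  [/\ C 0%N = set0,
      (forall k, reached z C k -> dfd_optimal (core :|: C k) (z k)) &
      (forall k, reached z C k -> adopters (C k) (z k) != set0 ->
         exists S : {set Trip},
           [/\ S \subset adopters (C k) (z k),
               #|S| = minn rho #|adopters (C k) (z k)|,
               (forall r r', r \in S -> r' \in adopters (C k) (z k) :\: S ->
                   upsilon r (z k) <= upsilon r' (z k)) &
               C k.+1 = C k :|: S])].

End ODMTSDefs.

From mathcomp Require Import all_boot all_order all_algebra.
Import Order.TTheory GRing.Theory Num.Theory.
Local Open Scope ring_scope.

(* While some latent trip outside C adopts the current design, rho-GRAD adds
   at least one such trip to C, so C grows strictly and the run must stop
   within #|Trip| + 1 iterations.  At the stopping iteration no trip of
   T' \ C adopts z, and T' \ (core :|: C) is contained in T' \ C: this is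
   exactly the correct rejection property for the optimal design z. *)

Section CorrectRejection.
Context {R : realFieldType} {N Trip : finType} {D : ODMTS R N Trip}.

Lemma correct_rejection_no_adopters (C : {set Trip}) (z : arcs N) :
  dfd_optimal D (core D :|: C) z -> adopters D C z = set0 ->
  correct_rejection D (core D :|: C) z.
Proof.
move=> z_opt no_adopters; split=> // r.
rewrite !inE negb_or => /andP[/andP[_ rNC] r_latent].
apply/negP => r_adopts.
suff : r \in adopters D C z by rewrite no_adopters inE.
by rewrite !inE rNC r_latent r_adopts.
Qed.

Context {rho : nat} {z : nat -> arcs N} {C : nat -> {set Trip}}.
Hypotheses (rho_gt0 : (0 < rho)%N) (run : rho_grad_run D rho z C).

Lemma rho_grad_proper {k} :
  reached D z C k -> adopters D (C k) (z k) != set0 -> C k \proper C k.+1.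
Proof.
case: run => _ _ step reached_k adopt_k.
have [S [S_adopt cardS _ ->]] := step k reached_k adopt_k.
have : (0 < #|S|)%N by rewrite cardS leq_min rho_gt0 card_gt0.
case/card_gt0P => r rS; apply/properP; split; first exact: subsetUl.
exists r; first by rewrite inE rS orbT.
by move: (subsetP S_adopt r rS); rewrite !inE => /andP[/andP[]].
Qed.

Lemma reached_leq_card {k} : reached D z C k -> (k <= #|C k|)%N.
Proof.
elim: k => // k IHk reached_Sk.
have adopt_k : adopters D (C k) (z k) != set0 by apply: reached_Sk.
have reached_k : reached D z C k by move=> j /ltnW; apply: reached_Sk.
exact: leq_ltn_trans (IHk reached_k) (proper_card (rho_grad_proper reached_k adopt_k)).
Qed.

Lemma rho_grad_stops :
  exists K, reached D z C K /\ adopters D (C K) (z K) = set0.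
Proof.
have stop : exists k, adopters D (C k) (z k) == set0.
  have [/existsP[k stop_k] | /existsPn never_stops] :=
    boolP [exists k : 'I_#|Trip|.+1, adopters D (C k) (z k) == set0].
    by exists k.
  have reached_last : reached D z C #|Trip|.+1.
    by move=> j ltj; apply: (never_stops (Ordinal ltj)).
  by have := leq_trans (reached_leq_card reached_last) (max_card _); rewrite ltnn.
case: (ex_minnP stop) => K /eqP stop_K K_min; exists K; split=> // j ltjK.
by apply/negP => /K_min; rewrite leqNgt ltjK.
Qed.

End CorrectRejection.

Theorem mainTheorem2 (R : realFieldType) (N Trip : finType)
  (D : ODMTS R N Trip) (rho : nat)
  (z : nat -> arcs N) (C : nat -> {set Trip}) :
  (1 <= rho)%N ->
  (forall r, 0 <= riders D r) ->
  rho_grad_run D rho z C ->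
  exists K : nat,
    [/\ reached D z C K,
        adopters D (C K) (z K) = set0 &
        correct_rejection D (core D :|: C K) (z K)].
Proof.
move=> rho_gt0 _ run.
have [K [reached_K stop_K]] := rho_grad_stops rho_gt0 run.
exists K; split=> //; apply: correct_rejection_no_adopters stop_K.
by case: run => _ z_opt _; apply: z_opt.
Qed.
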